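(* Let $k\ge 1$ and $n$ be positive integers with $n>3k+\sqrt{2k^{2}-k}$. Then for every $k$-regular graph $G$ with $n$ vertices, the complement $\overline{G}$ is not Helly.
   Context: All graphs are finite and simple. A clique is a maximal set of pairwise adjacent vertices. A collection of sets is intersecting if any two members have nonempty intersection, and has the Helly property if every intersecting subcollection has nonempty total intersection. A graph is Helly if its collection of cliques has the Helly property. *)

From mathcomp Require Import all_boot all_order all_algebra all_field.
Set Implicit Arguments. Unset Strict Implicit. Unset Printing Implicit Defensive.

Definition simple_graph (V : finType) (e : rel V) : Prop :=
  symmetric e /\ irreflexive e.

Definition regular (V : finType) (e : rel V) (k : nat) : Prop :=
  forall v : V, #|[set w | e v w]| = k.

Definition complement (V : finType) (e : rel V) : rel V :=
  fun x y => (x != y) && ~~ e x y.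

Definition complete_set (V : finType) (e : rel V) (Q : {set V}) : bool :=
  [forall x in Q, forall y in Q, (x != y) ==> e x y].

Definition is_clique (V : finType) (e : rel V) (Q : {set V}) : bool :=
  maxset (complete_set e) Q.

Definition intersecting (V : finType) (F : {set {set V}}) : Prop :=
  forall A B, A \in F -> B \in F -> A :&: B != set0.

Definition helly_family (V : finType) (C : {set {set V}}) : Prop :=
  forall F : {set {set V}}, F \subset C -> intersecting F ->
    \bigcap_(A in F) A != set0.

Definition helly_graph (V : finType) (e : rel V) : Prop :=
  helly_family [set Q | is_clique e Q].

From mathcomp Require Import all_boot all_order all_algebra all_field.
From mathcomp Require Import zify ring.
Set Implicit Arguments. Unset Strict Implicit. Unset Printing Implicit Defensive.

(* A k-regular graph G on n > 3k + sqrt(2k^2 - k) vertices has an independent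
   triple a, b, c with |N(a) ∩ N(b)| + |(N(a) ∪ N(b)) ∩ N(c)| < k: take any a,
   a non-neighbour b of a with few common neighbours (averaging over the
   n - 1 - k non-neighbours of a), then c outside N(a) ∪ N(b) ∪ {a, b} with few
   neighbours in N(a) ∪ N(b) (averaging again).  The cliques of the complement
   containing two of a, b, c pairwise intersect.  A vertex w in all of them has a
   G-neighbour u outside the small set above, so u is non-adjacent to two of
   a, b, c; a clique of the complement through u and these two contains w,
   although w and u are adjacent in G. *)

Section Counting.
Variable T : finType.

Lemma sum_nat_pred_card (A : {set T}) (P : pred T) :
  \sum_(x in A) P x = #|[set x in A | P x]|.
Proof. by rewrite -sum1dep_card big_mkcondr; apply: eq_bigr => x _; case: (P x). Qed.

Lemma double_count (A B : {set T}) (r : rel T) :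
  \sum_(x in A) #|[set y in B | r x y]| = \sum_(y in B) #|[set x in A | r x y]|.
Proof.
under eq_bigr do rewrite -sum_nat_pred_card.
by rewrite exchange_big; under eq_bigr do rewrite sum_nat_pred_card.
Qed.

Lemma exists_le_average (A : {set T}) (f : T -> nat) : 0 < #|A| ->
  exists2 x, x \in A & f x * #|A| <= \sum_(y in A) f y.
Proof.
case/card_gt0P => a aA; case: (arg_minnP f aA) => x xA xmin; exists x => //.
by rewrite mulnC -sum_nat_const; apply: leq_sum.
Qed.

End Counting.

Lemma four_le_three_gap (k d : nat) : 1 <= k -> 2 * k ^ 2 - k < d ^ 2 -> 4 * k <= 3 * d.
Proof.
move=> k1 hd; rewrite leqNgt; apply/negP => hlt.
have hd3 : 3 * d <= 4 * k - 1 by lia.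
have := leq_mul hd3 hd3; nia.
Qed.

Lemma triple_count_ineq (k d t : nat) : 1 <= k -> 4 * k <= 3 * d ->
  t * (2 * k + d - 1) <= k * (k - 1) ->
  k * (2 * k - t) < (k - t) * (k + d + t - 2) + 2 * k.
Proof.
move=> k1 hkd ht.
have t_small : 3 * t <= k - 1.
  have : t * (3 * k) <= k * (k - 1).
    by apply: leq_trans ht; apply: leq_mul => //; lia.
  nia.
have sq_t_lt : t * t < (d - k) * (k - t).
  have sq_t : 9 * (t * t) <= (k - 1) * (k - 1).
    by have := leq_mul t_small t_small; rewrite mulnACA.
  have prod_ge : k * (2 * k + 1) <= 3 * (d - k) * (3 * (k - t)).
    by apply: leq_mul; lia.
  have sq_k : (k - 1) * (k - 1) < k * (2 * k + 1).
    by apply: (@leq_ltn_trans (k * k)); [apply: leq_mul | rewrite ltn_pmul2l]; lia.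
  nia.
have [u ku] : exists u, k = t + u.+1 by exists (k - t - 1); lia.
have [g dg] : exists g, d = k + g by exists (d - k); lia.
subst d k; move: sq_t_lt; rewrite !addKn.
have -> : 2 * (t + u.+1) - t = t + 2 * u.+1 by lia.
have -> : t + u.+1 + (t + u.+1 + g) + t - 2 = 3 * t + 2 * u + g by lia.
(* The goal amounts to t^2 < (d - k)(k - t) + 2t. *)
have expand : (t + u.+1) * (t + 2 * u.+1) + g * u.+1 + 2 * t
              = u.+1 * (3 * t + 2 * u + g) + 2 * (t + u.+1) + t * t by ring.
lia.
Qed.

Section RegularGraph.
Variables (V : finType) (e : rel V) (k : nat).
Hypothesis e_sym : symmetric e.
Hypothesis e_irr : irreflexive e.
Hypothesis e_reg : forall v, #|[set w | e v w]| = k.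

Local Notation N v := [set w | e v w].

Lemma sum_card_setI_nbhd (A B : {set V}) :
  \sum_(x in A) #|B :&: N x| = \sum_(y in B) #|A :&: N y|.
Proof.
have setI_nbhd (X : {set V}) x : X :&: N x = [set y in X | e x y].
  by apply/setP => y; rewrite !inE.
under eq_bigr do rewrite setI_nbhd.
rewrite double_count; apply: eq_bigr => y _.
by rewrite setI_nbhd; apply: eq_card => x; rewrite !inE e_sym.
Qed.

Lemma card_non_nbhd (a : V) : #|~: (a |: N a)| + k + 1 = #|V|.
Proof. by have := cardsC (a |: N a); rewrite cardsU1 inE e_irr e_reg; lia. Qed.

Lemma sum_common_nbhd_le (a : V) :
  \sum_(b in ~: (a |: N a)) #|N a :&: N b| <= k * (k - 1).
Proof.
rewrite sum_card_setI_nbhd -{1}(e_reg a) -sum_nat_const; apply: leq_sum => x.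
rewrite inE => eax; rewrite -(e_reg x) (cardsD1 a (N x)) inE e_sym eax add1n subn1.
apply: subset_leq_card; apply/subsetP => y.
by rewrite !inE negb_or => /andP [/andP [-> _] ->].
Qed.

Lemma sum_nbhd_setU_le (a b : V) : a != b ->
  \sum_(c in ~: (N a :|: N b :|: [set a; b])) #|(N a :|: N b) :&: N c| + 2 * k
  <= #|N a :|: N b| * k.
Proof.
move=> ab; set W := N a :|: N b; set C := ~: (W :|: _).
have nbhd_split x : x \in W -> #|C :&: N x| + (e x a + e x b) <= k.
  move=> xW; rewrite -(e_reg x) (cardsD1 a (N x)) (cardsD1 b (N x :\ a)).
  rewrite !inE eq_sym ab /=.
  suff : #|C :&: N x| <= #|N x :\ a :\ b| by lia.
  apply: subset_leq_card; apply/subsetP => y.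
  by rewrite !inE !negb_or => /andP [/andP [_ /andP [-> ->]] ->].
have sum_adj z : z \in [set a; b] -> \sum_(x in W) e x z = k.
  rewrite !inE => zab; rewrite sum_nat_pred_card -(e_reg z); apply: eq_card => x.
  rewrite !inE (e_sym x z) andb_idl //.
  by case/orP: zab => /eqP -> ->; rewrite ?orbT.
rewrite sum_card_setI_nbhd mul2n -addnn -{1}(sum_adj a) ?setU11 //.
rewrite -{1}(sum_adj b) ?setU11 ?setU1r ?set11 //.
rewrite -!big_split -sum_nat_const; apply: leq_sum => x xW.
exact: nbhd_split.
Qed.

Lemma exists_independent_triple : 1 <= k -> 4 * k <= 3 * (#|V| - 3 * k) ->
  exists a b c, [/\ ~~ e a b, ~~ e a c & ~~ e b c] /\
    #|N a :&: N b| + #|(N a :|: N b) :&: N c| < k.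
Proof.
move=> k1 hkd; have /card_gt0P [a _] : 0 < #|V| by lia.
set M := ~: (a |: N a); have cardM : #|M| + k + 1 = #|V| := card_non_nbhd a.
have [b bM ht] : exists2 b, b \in M & #|N a :&: N b| * #|M| <= k * (k - 1).
  have [|b bM hb] := @exists_le_average _ M (fun b => #|N a :&: N b|); first lia.
  by exists b => //; apply: leq_trans hb (sum_common_nbhd_le a).
move: bM; rewrite !inE negb_or => /andP [ba nab].
set t := #|N a :&: N b|; set W := N a :|: N b; set C := ~: (W :|: [set a; b]).
have cardW : #|W| + t = 2 * k by rewrite /W /t cardsUI !e_reg; lia.
have cardC : #|C| + #|W| + 2 = #|V|.
  have disj : [disjoint [set a; b] & W].
    by rewrite disjoints_subset subUset !sub1set !inE e_irr (e_sym b) (negbTE nab) e_irr.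
  have := cardsC (W :|: [set a; b]).
  rewrite cardsU setIC (disjoint_setI0 disj) cards0 cards2 eq_sym ba subn0.
  by rewrite -/C /=; lia.
have gap : k * #|W| < (k - t) * #|C| + 2 * k.
  have := @triple_count_ineq k (#|V| - 3 * k) t k1 hkd.
  have -> : 2 * k + (#|V| - 3 * k) - 1 = #|M| by lia.
  have -> : 2 * k - t = #|W| by lia.
  have -> : k + (#|V| - 3 * k) + t - 2 = #|C| by lia.
  exact.
have [|c cC hc] := @exists_le_average _ C (fun c => #|W :&: N c|); first lia.
have small : #|W :&: N c| < k - t.
  rewrite -(ltn_pmul2r (_ : 0 < #|C|)); last lia.
  have := sum_nbhd_setU_le (_ : a != b).
  by rewrite -/W -/C eq_sym ba mulnC => /(_ isT); lia.
move: cC; rewrite !inE !negb_or => /andP [/andP [nac nbc] _].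
exists a, b, c; split; first by rewrite nab nac nbc.
by rewrite -/t -/W; lia.
Qed.

Lemma complement_triangle_complete (x y z : V) :
  ~~ e x y -> ~~ e x z -> ~~ e y z -> complete_set (complement e) [set x; y; z].
Proof.
move=> xy xz yz.
apply/forallP => p; apply/implyP; rewrite !inE => hp.
apply/forallP => q; apply/implyP; rewrite !inE => hq.
apply/implyP => pq; rewrite /complement pq /=.
move: hp hq pq; rewrite -!orbA => /or3P [] /eqP -> /or3P [] /eqP -> pq;
  rewrite ?eqxx // in pq *; rewrite ?(e_sym y x) ?(e_sym z x) ?(e_sym z y) //.
Qed.

Lemma triangle_in_clique (x y z : V) : ~~ e x y -> ~~ e x z -> ~~ e y z ->
  exists2 Q, is_clique (complement e) Q & [set x; y; z] \subset Q.
Proof.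
move=> xy xz yz.
by have [Q] := maxset_exists (complement_triangle_complete xy xz yz); exists Q.
Qed.

Lemma clique_complement_nonadj (Q : {set V}) (w u : V) :
  is_clique (complement e) Q -> w \in Q -> u \in Q -> ~~ e w u.
Proof.
move=> /maxsetP [/forallP cQ _] wQ uQ.
have [-> | wu] := eqVneq w u; first by rewrite e_irr.
by move: (cQ w); rewrite wQ => /forallP /(_ u); rewrite uQ wu /complement /= => /andP [].
Qed.

Lemma triple_not_helly (a b c : V) : ~~ e a b -> ~~ e a c -> ~~ e b c ->
  #|N a :&: N b| + #|(N a :|: N b) :&: N c| < k -> ~ helly_graph (complement e).
Proof.
move=> ab ac bc small helly.
pose two_of (Q : {set V}) :=
  [|| (a \in Q) && (b \in Q), (b \in Q) && (c \in Q) | (a \in Q) && (c \in Q)].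
pose F := [set Q | is_clique (complement e) Q && two_of Q].
have F_cliques : F \subset [set Q | is_clique (complement e) Q].
  by apply/subsetP => Q; rewrite !inE => /andP [].
have F_intersecting : intersecting F.
  move=> A B; rewrite !inE => /andP [_ hA] /andP [_ hB].
  case/or3P: hA => /andP [h1 h2]; case/or3P: hB => /andP [h3 h4]; apply/set0Pn;
  first [ by exists a; rewrite inE ?h1 ?h2 ?h3 ?h4
        | by exists b; rewrite inE ?h1 ?h2 ?h3 ?h4
        | by exists c; rewrite inE ?h1 ?h2 ?h3 ?h4 ].
have /set0Pn [w /bigcapP w_in] := helly F F_cliques F_intersecting.
have [u ewu uX] : exists2 u, e w u & u \notin (N a :&: N b) :|: ((N a :|: N b) :&: N c).
  suff /subsetPn [u] : ~~ (N w \subset (N a :&: N b) :|: ((N a :|: N b) :&: N c)).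
    by rewrite inE; exists u.
  apply/negP => /subset_leq_card; rewrite e_reg; apply/negP; rewrite -ltnNge.
  exact: leq_ltn_trans (leq_card_setU _ _) small.
have avoid_pair x y : ~~ e u x -> ~~ e u y -> ~~ e x y ->
    (forall Q : {set V}, x \in Q -> y \in Q -> two_of Q) -> False.
  move=> ux uy xy two; have [Q cQ sQ] := triangle_in_clique ux uy xy.
  have /and3P [uQ xQ yQ] : [&& u \in Q, x \in Q & y \in Q].
    by rewrite !(subsetP sQ) // !inE eqxx ?orbT.
  have wQ : w \in Q by apply: w_in; rewrite inE cQ two.
  by have := clique_complement_nonadj cQ wQ uQ; rewrite ewu.
move: uX; rewrite !inE ![e _ u]e_sym.
case eau: (e u a); case ebu: (e u b); case ecu: (e u c) => //= _.
- by apply: (avoid_pair b c); rewrite ?ebu ?ecu // => Q;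
    rewrite /two_of => -> ->; rewrite orbT.
- by apply: (avoid_pair a c); rewrite ?eau ?ecu // => Q;
    rewrite /two_of => -> ->; rewrite !orbT.
- by apply: (avoid_pair a b); rewrite ?eau ?ebu // => Q;
    rewrite /two_of => -> ->.
- by apply: (avoid_pair a b); rewrite ?eau ?ebu // => Q;
    rewrite /two_of => -> ->.
Qed.
End RegularGraph.

Import Order.TTheory GRing.Theory Num.Theory.
Local Open Scope ring_scope.

Lemma lt_sqr_sub_of_sqrtC (a m n : nat) :
  a%:R + sqrtC m%:R < n%:R :> algC -> (m < (n - a) ^ 2)%N.
Proof.
move=> hn; have an : (a <= n)%N.
  by rewrite -(ler_nat algC); apply: le_trans (ltW hn); rewrite lerDl sqrtC_ge0.
rewrite -(subnKC an) natrD ltrD2l in hn.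
rewrite -(ltr_nat algC) natrX -ltr_sqrtC ?sqrCK ?qualifE /= ?ler0n ?exprn_ge0 //.
Qed.

Theorem mainTheorem6 (k n : nat) (hk : (1 <= k)%N)
  (hn : 3%:R * (k%:R : algC) + sqrtC ((2 * k ^ 2 - k)%N)%:R < n%:R) :
  forall (V : finType) (e : rel V),
    #|V| = n -> simple_graph e -> regular e k ->
    ~ helly_graph (complement e).
Proof.
move=> V e cardV [e_sym e_irr] e_reg.
have gap : (2 * k ^ 2 - k < (n - 3 * k) ^ 2)%N.
  by apply: lt_sqr_sub_of_sqrtC; rewrite natrM.
have := four_le_three_gap hk gap; rewrite -cardV => hkd.
have [a [b [c [[ab ac bc] small]]]] := exists_independent_triple e_sym e_irr e_reg hk hkd.
exact: (triple_not_helly e_sym e_irr e_reg ab ac bc small).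
Qed.
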